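(* Let $\Gamma$ be a group and $S$ a $\Gamma$-graded regular semigroup. Then the map $I\mapsto I_\varepsilon:=S_\varepsilon\cap I$ is a one-to-one, inclusion-preserving correspondence between the left ideals of $S$ and the left ideals of $S_\varepsilon$ (with inverse $J\mapsto SJ$); likewise for right ideals.
   Context: Semigroups have a zero; $S$ is $\Gamma$-graded via $\deg:S\setminus\{0\}\to\Gamma$ with $\deg(st)=\deg(s)\deg(t)$ whenever $st\neq0$; $S_\alpha=\deg^{-1}(\alpha)\cup\{0\}$, $\varepsilon$ the identity of $\Gamma$. $S$ is regular if every $s$ has $t$ with $sts=s$. *)

Set Implicit Arguments.

Definition is_semigroup0 (T : Type) (mul : T -> T -> T) (z : T) : Prop :=
  (forall a b c, mul a (mul b c) = mul (mul a b) c) /\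
  (forall a, mul z a = z) /\ (forall a, mul a z = z).

Definition is_group (G : Type) (gm : G -> G -> G) (e : G) (gi : G -> G) : Prop :=
  (forall a b c, gm a (gm b c) = gm (gm a b) c) /\
  (forall a, gm e a = a) /\ (forall a, gm a e = a) /\
  (forall a, gm (gi a) a = e) /\ (forall a, gm a (gi a) = e).

(* Gamma-grading: deg is only meaningful on S \ {0}; deg(st) = deg s deg t when st <> 0. *)
Definition graded (T G : Type) (mul : T -> T -> T) (z : T) (gm : G -> G -> G)
  (deg : T -> G) : Prop :=
  forall s t, s <> z -> t <> z -> mul s t <> z -> deg (mul s t) = gm (deg s) (deg t).

Definition component (T G : Type) (z : T) (deg : T -> G) (a : G) : T -> Prop :=
  fun s => s = z \/ (s <> z /\ deg s = a).

Definition regular (T : Type) (mul : T -> T -> T) : Prop :=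
  forall s, exists t, mul (mul s t) s = s.

Definition full (T : Type) : T -> Prop := fun _ => True.

Definition subset (T : Type) (A B : T -> Prop) : Prop := forall x, A x -> B x.
Definition set_eq (T : Type) (A B : T -> Prop) : Prop := forall x, A x <-> B x.
Definition inter (T : Type) (A B : T -> Prop) : T -> Prop := fun x => A x /\ B x.

(* Left / right ideals of the subsemigroup A (A = full for S itself):
   nonempty subsets I of A with A I ⊆ I (resp. I A ⊆ I). *)
Definition left_ideal (T : Type) (mul : T -> T -> T) (A I : T -> Prop) : Prop :=
  (exists x, I x) /\ subset I A /\ (forall s x, A s -> I x -> I (mul s x)).
Definition right_ideal (T : Type) (mul : T -> T -> T) (A I : T -> Prop) : Prop :=
  (exists x, I x) /\ subset I A /\ (forall s x, A s -> I x -> I (mul x s)).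

Definition lprod (T : Type) (mul : T -> T -> T) (J : T -> Prop) : T -> Prop :=
  fun x => exists s t, J t /\ x = mul s t.
Definition rprod (T : Type) (mul : T -> T -> T) (J : T -> Prop) : T -> Prop :=
  fun x => exists s t, J t /\ x = mul t s.

From Stdlib Require Import Classical.

Set Implicit Arguments.

(* In a graded regular semigroup every x satisfies x = x (t x) with x t x = x,
   and t x has degree e (a group equation deg x = deg x deg (t x)); hence each
   left ideal I is S (S_e ∩ I).  Conversely, if s t ∈ S_e with t ∈ J ⊆ S_e and
   s t ≠ 0, then deg s = e, so S_e ∩ S J = J.  Right ideals are left ideals of
   the opposite semigroup, graded by the opposite group. *)

Section Group.
Variables (G : Type) (gm : G -> G -> G) (e : G) (gi : G -> G).
Hypothesis HG : is_group gm e gi.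

Lemma group_mul_eq_self a b : gm a b = a -> b = e.
Proof.
  destruct HG as (Hassoc & Hidl & _ & Hinvl & _). intro Hab.
  rewrite <- (Hidl b), <- (Hinvl a), <- Hassoc, Hab. reflexivity.
Qed.

Lemma is_group_op : is_group (fun a b => gm b a) e gi.
Proof.
  destruct HG as (Hassoc & ? & ? & ? & ?).
  split; [intros; symmetry; apply Hassoc | repeat split; auto].
Qed.

End Group.

Section Semigroup.
Variables (T : Type) (mul : T -> T -> T) (z : T).
Hypothesis HS : is_semigroup0 mul z.

Lemma is_semigroup0_op : is_semigroup0 (fun a b => mul b a) z.
Proof.
  destruct HS as (Hassoc & ? & ?).
  split; [intros; symmetry; apply Hassoc | auto].
Qed.

Lemma regular_op : regular mul -> regular (fun a b => mul b a).
Proof.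
  intros Hreg s. destruct (Hreg s) as [t Ht]. exists t.
  destruct HS as (Hassoc & _ & _). rewrite Hassoc. exact Ht.
Qed.

Lemma zero_mem_left_ideal A I : left_ideal mul A I -> A z -> I z.
Proof.
  destruct HS as (_ & Hzl & _). intros ((x & Ix) & _ & HI) Az.
  rewrite <- (Hzl x). apply HI; assumption.
Qed.

Lemma left_ideal_lprod J : (exists x, J x) -> left_ideal mul (@full T) (lprod mul J).
Proof.
  destruct HS as (Hassoc & _ & _). intros [j Jj].
  split; [exists (mul z j), z, j; auto | split; [intros ? ?; exact I |]].
  intros s x _ (a & t & Jt & ->). exists (mul s a), t. rewrite Hassoc. auto.
Qed.

End Semigroup.

Lemma subset_inter (T : Type) (A I I' : T -> Prop) :
  subset I I' -> subset (inter A I) (inter A I').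
Proof. intros HII' x [Ax Ix]. split; auto. Qed.

Lemma subset_lprod (T : Type) (mul : T -> T -> T) (J J' : T -> Prop) :
  subset J J' -> subset (lprod mul J) (lprod mul J').
Proof. intros HJJ' x (s & t & Jt & ->). exists s, t. auto. Qed.

Lemma graded_op (T G : Type) (mul : T -> T -> T) (z : T) (gm : G -> G -> G)
  (deg : T -> G) :
  graded mul z gm deg -> graded (fun a b => mul b a) z (fun a b => gm b a) deg.
Proof. intros Hgr s t Hs Ht Hst. apply Hgr; assumption. Qed.

Section GradedSemigroup.
Variables (T : Type) (mul : T -> T -> T) (z : T)
  (G : Type) (gm : G -> G -> G) (e : G) (gi : G -> G) (deg : T -> G).
Hypotheses (HS : is_semigroup0 mul z) (HG : is_group gm e gi)
  (Hgr : graded mul z gm deg).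

Let Se := component z deg e.

Lemma component_e_zero : Se z.
Proof. left; reflexivity. Qed.

Lemma component_e_mul s x : Se s -> Se x -> Se (mul s x).
Proof.
  destruct HS as (_ & Hzl & Hzr). destruct HG as (_ & Hidl & _).
  intros Hs Hx. destruct (classic (mul s x = z)) as [Hsx | Hsx]; [left; exact Hsx |].
  destruct Hs as [-> | [Hs Ds]]; [rewrite Hzl in Hsx; tauto |].
  destruct Hx as [-> | [Hx Dx]]; [rewrite Hzr in Hsx; tauto |].
  right. split; [exact Hsx |]. rewrite Hgr, Ds, Dx by assumption. apply Hidl.
Qed.

Lemma component_e_left_factor s t :
  Se t -> Se (mul s t) -> mul s t <> z -> Se s.
Proof.
  destruct HS as (_ & Hzl & Hzr). destruct HG as (_ & _ & Hidr & _).
  intros Ht Hst Hst0.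
  assert (Hs0 : s <> z) by (intros ->; rewrite Hzl in Hst0; tauto).
  assert (Ht0 : t <> z) by (intros ->; rewrite Hzr in Hst0; tauto).
  destruct Ht as [| [_ Dt]]; [tauto |]. destruct Hst as [| [_ Dst]]; [tauto |].
  right. split; [exact Hs0 |].
  rewrite Hgr, Dt, Hidr in Dst by assumption. exact Dst.
Qed.

Lemma component_e_regular_unit x t : mul (mul x t) x = x -> Se (mul t x).
Proof.
  destruct HS as (Hassoc & _ & Hzr). intro Hx.
  destruct (classic (mul t x = z)) as [Htx | Htx]; [left; exact Htx |].
  assert (Hx0 : x <> z) by (intros ->; rewrite Hzr in Htx; tauto).
  assert (Hxtx : mul x (mul t x) = x) by (rewrite Hassoc; exact Hx).
  right. split; [exact Htx |].
  apply (group_mul_eq_self HG (a := deg x)).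
  rewrite <- Hgr by congruence. congruence.
Qed.

Lemma left_ideal_inter_component_e I :
  left_ideal mul (@full T) I -> left_ideal mul Se (inter Se I).
Proof.
  intro HI. assert (Iz : I z) by exact (zero_mem_left_ideal HS HI Logic.I).
  destruct HI as (_ & _ & HI).
  split; [exists z; split; [apply component_e_zero | exact Iz] |].
  split; [intros x [Sx _]; exact Sx |].
  intros s x Ss [Sx Ix]. split; [apply component_e_mul; assumption |].
  apply HI; [exact Logic.I | exact Ix].
Qed.

Hypothesis Hreg : regular mul.

Lemma lprod_inter_component_e I :
  left_ideal mul (@full T) I -> set_eq (lprod mul (inter Se I)) I.
Proof.
  destruct HS as (Hassoc & _ & _). intros (_ & _ & HI) x. split.
  - intros (s & t & [_ It] & ->). apply HI; [exact Logic.I | exact It].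
  - intro Ix. destruct (Hreg x) as [t Ht].
    exists x, (mul t x). rewrite Hassoc. split; [| symmetry; exact Ht].
    split; [apply (component_e_regular_unit Ht) |].
    apply HI; [exact Logic.I | exact Ix].
Qed.

Lemma inter_component_e_lprod J :
  left_ideal mul Se J -> set_eq (inter Se (lprod mul J)) J.
Proof.
  intro HJ. assert (Jz : J z) by exact (zero_mem_left_ideal HS HJ component_e_zero).
  destruct HJ as (_ & HJS & HJ). intro x. split.
  - intros [Sx (s & t & Jt & ->)].
    destruct (classic (mul s t = z)) as [Hst | Hst]; [rewrite Hst; exact Jz |].
    apply HJ; [| exact Jt].
    apply (component_e_left_factor (HJS t Jt) Sx Hst).
  - intro Jx. split; [apply HJS; exact Jx |].
    destruct (Hreg x) as [y Hy]. exists (mul x y), x. auto.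
Qed.

Lemma left_ideal_correspondence :
  (forall I, left_ideal mul (@full T) I ->
      left_ideal mul Se (inter Se I) /\ set_eq (lprod mul (inter Se I)) I) /\
  (forall J, left_ideal mul Se J ->
      left_ideal mul (@full T) (lprod mul J) /\ set_eq (inter Se (lprod mul J)) J) /\
  (forall I I', left_ideal mul (@full T) I -> left_ideal mul (@full T) I' ->
      (subset I I' <-> subset (inter Se I) (inter Se I'))) /\
  (forall J J', left_ideal mul Se J -> left_ideal mul Se J' ->
      (subset J J' <-> subset (lprod mul J) (lprod mul J'))).
Proof.
  split; [| split; [| split]].
  - intros I HI. split;
      [apply left_ideal_inter_component_e | apply lprod_inter_component_e]; exact HI.
  - intros J HJ. split;
      [exact (left_ideal_lprod HS _ (proj1 HJ)) | exact (inter_component_e_lprod HJ)].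
  - intros I I' HI HI'. split; [apply subset_inter |].
    intros HII' x Ix. apply (lprod_inter_component_e HI'), (subset_lprod (mul := mul) HII').
    apply (lprod_inter_component_e HI), Ix.
  - intros J J' HJ HJ'. split; [apply subset_lprod |].
    intros HJJ' x Jx. apply (inter_component_e_lprod HJ'), (subset_inter (A := Se) HJJ').
    apply (inter_component_e_lprod HJ), Jx.
Qed.

End GradedSemigroup.

Theorem proposition2p7 (T : Type) (mul : T -> T -> T) (z : T)
  (G : Type) (gm : G -> G -> G) (e : G) (gi : G -> G) (deg : T -> G)
  (HS : is_semigroup0 mul z) (HG : is_group gm e gi)
  (Hgr : graded mul z gm deg) (Hreg : regular mul) :
  let Se := component z deg e in
  (* left ideals *)
  ((forall I, left_ideal mul (@full T) I ->
      left_ideal mul Se (inter Se I) /\ set_eq (lprod mul (inter Se I)) I) /\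
   (forall J, left_ideal mul Se J ->
      left_ideal mul (@full T) (lprod mul J) /\ set_eq (inter Se (lprod mul J)) J) /\
   (forall I I', left_ideal mul (@full T) I -> left_ideal mul (@full T) I' ->
      (subset I I' <-> subset (inter Se I) (inter Se I'))) /\
   (forall J J', left_ideal mul Se J -> left_ideal mul Se J' ->
      (subset J J' <-> subset (lprod mul J) (lprod mul J')))) /\
  (* right ideals *)
  ((forall I, right_ideal mul (@full T) I ->
      right_ideal mul Se (inter Se I) /\ set_eq (rprod mul (inter Se I)) I) /\
   (forall J, right_ideal mul Se J ->
      right_ideal mul (@full T) (rprod mul J) /\ set_eq (inter Se (rprod mul J)) J) /\
   (forall I I', right_ideal mul (@full T) I -> right_ideal mul (@full T) I' ->
      (subset I I' <-> subset (inter Se I) (inter Se I'))) /\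
   (forall J J', right_ideal mul Se J -> right_ideal mul Se J' ->
      (subset J J' <-> subset (rprod mul J) (rprod mul J')))).
Proof.
  intro Se. split.
  - exact (left_ideal_correspondence HS HG Hgr Hreg).
  - exact (left_ideal_correspondence (is_semigroup0_op HS) (is_group_op HG)
             (graded_op Hgr) (regular_op HS Hreg)).
Qed.
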